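(* Let $T_1$ be a quadtree in $\mathbb{R}^d$ and $T^*$ its extended quadtree. Let $C_j$ be a cell of $T^*$ with brand $j$. Then every neighboring cell $N$ of $C_j$ with $|N|\ge 2^j|C_j|$ has brand at most $j+1$.
   Context: A quadtree on an axis-aligned root hypercube $R\subset\mathbb{R}^d$ is a hierarchical decomposition in which every node has an associated axis-aligned hypercube (cell) and is either a leaf or has $2^d$ equal-sized children whose cells subdivide its cell. The size $|C|$ of a cell is its edge length. Two cells are neighbors if they are interior-disjoint and share (part of) a $(d-1)$-dimensional facet. For an integer $j$, a cell $C$ is $2^j$-smooth if every leaf neighboring $C$ has size at most $2^j|C|$. Extended quadtree: the cells of $T_1$ get brand $1$. Recursively, for $j\ge1$, let $T^j$ be the quadtree formed by $\bigcup_{i\le j}T_i$, and let $T_{j+1}$ be the minimal set of cells obtained by splitting cells of $T^j$ such that every cell of $T_j$ is $2^j$-smooth in the resulting quadtree; the cells of $T_{j+1}$ get brand $j+1$. The extended quadtree is $T^*=T^{d+1}$. *)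

From HB Require Import structures.
From mathcomp Require Import all_boot all_order all_algebra.
From mathcomp Require Import classical_sets cardinality reals.
Set Implicit Arguments. Unset Strict Implicit. Unset Printing Implicit Defensive.
Import Order.TTheory GRing.Theory Num.Theory.
Local Open Scope classical_set_scope.
Local Open Scope ring_scope.

(* A cell of a quadtree on the root hypercube R = prod_i [a_i, a_i + s]:
   a dyadic subcube given by its depth [lvl] and integer position [idx]. *)
Record cell (d : nat) := Cell { lvl : nat; idx : 'I_d -> nat }.

Definition valid_cell d (c : cell d) : Prop := forall i, (idx c i < 2 ^ lvl c)%N.

Definition root_cell d : cell d := @Cell d 0 (fun _ => 0%N).

Definition is_child d (c p : cell d) : Prop :=
  lvl c = (lvl p).+1 /\ forall i, (idx c i %/ 2)%N = idx p i.

Definition quadtree d (Q : set (cell d)) : Prop :=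
  [/\ finite_set Q, Q (root_cell d), (forall c, Q c -> valid_cell c)
    & forall c p, Q c -> is_child c p -> Q p /\ forall c', is_child c' p -> Q c'].

Definition leaf d (Q : set (cell d)) (c : cell d) : Prop :=
  Q c /\ forall c', is_child c' c -> ~ Q c'.

Definition lo (R : realType) d (a : 'I_d -> R) (s : R) (c : cell d) (i : 'I_d) : R :=
  a i + s * (idx c i)%:R / (2 ^+ lvl c).

Definition csize (R : realType) d (s : R) (c : cell d) : R := s / (2 ^+ lvl c).

(* Neighbors: interior-disjoint axis-aligned cubes whose intersection is
   (d-1)-dimensional: they touch in exactly one coordinate i and their
   (open) projections overlap in every other coordinate. *)
Definition neighbor (R : realType) d (a : 'I_d -> R) (s : R) (c c' : cell d) : Prop :=
  exists i : 'I_d,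
    (lo a s c i + csize s c = lo a s c' i \/ lo a s c' i + csize s c' = lo a s c i) /\
    forall k : 'I_d, k != i ->
      Num.max (lo a s c k) (lo a s c' k) <
      Num.min (lo a s c k + csize s c) (lo a s c' k + csize s c').

Definition smooth (R : realType) d (a : 'I_d -> R) (s : R) (Q : set (cell d))
  (j : nat) (c : cell d) : Prop :=
  forall L, leaf Q L -> neighbor a s L c -> csize s L <= 2 ^+ j * csize s c.

Definition good_ext (R : realType) d (a : 'I_d -> R) (s : R)
  (U B : set (cell d)) (j : nat) (Q : set (cell d)) : Prop :=
  [/\ quadtree Q, U `<=` Q & forall c, B c -> smooth a s Q j c].

Definition min_ext (R : realType) d (a : 'I_d -> R) (s : R)
  (U B : set (cell d)) (j : nat) : set (cell d) :=
  [set c | forall Q, good_ext a s U B j Q -> Q c].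

(* ext n = (T^(n+1), T_(n+1)) *)
Fixpoint ext (R : realType) d (a : 'I_d -> R) (s : R) (T1 : set (cell d))
  (n : nat) : set (cell d) * set (cell d) :=
  match n with
  | 0 => (T1, T1)
  | n'.+1 =>
      let UB := ext a s T1 n' in
      let U' := min_ext a s UB.1 UB.2 n in   (* n = j with j = n'+1 *)
      (U', U' `\` UB.1)
  end.

Definition brand_set (R : realType) d (a : 'I_d -> R) (s : R) (T1 : set (cell d))
  (j : nat) : set (cell d) := (ext a s T1 j.-1).2.

Definition upto (R : realType) d (a : 'I_d -> R) (s : R) (T1 : set (cell d))
  (j : nat) : set (cell d) := (ext a s T1 j.-1).1.

Definition Tstar (R : realType) d (a : 'I_d -> R) (s : R) (T1 : set (cell d))
  : set (cell d) := upto a s T1 d.+1.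

From HB Require Import structures.
From mathcomp Require Import all_boot all_order all_algebra.
From mathcomp Require Import classical_sets cardinality reals boolp.
From mathcomp Require Import zify ring lra.
Set Implicit Arguments. Unset Strict Implicit. Unset Printing Implicit Defensive.
Import Order.TTheory GRing.Theory Num.Theory.
Local Open Scope classical_set_scope.
Local Open Scope ring_scope.

(* Let T^(j+1) be the minimal extension in which every cell C of brand j is
   2^j-smooth.  If a large neighbour N of C were not in T^(j+1), the leaf L of
   T^(j+1) containing N would be strictly larger than N, hence larger than
   2^j|C| and than C.  L cannot contain C (it would then have a child in
   T^(j+1)), so L touches C along the same facet as N does: L is a neighbouring
   leaf violating the smoothness of C.  Hence N already lies in T^(j+1) and its
   brand is at most j+1 (for j = d+1 this is just N in T^* = T^(d+1)). *)

Definition ancestor d (c : cell d) (m : nat) : cell d :=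
  @Cell d m (fun k => (idx c k %/ 2 ^ (lvl c - m))%N).

Lemma ancestor_lvl d (c : cell d) : ancestor c (lvl c) = c.
Proof.
case: c => l f; rewrite /ancestor /=; congr Cell.
by apply: funext => k; rewrite subnn expn0 divn1.
Qed.

Lemma ancestor0 d (c : cell d) : valid_cell c -> ancestor c 0 = root_cell d.
Proof.
move=> hc; rewrite /ancestor /root_cell; congr Cell.
by apply: funext => k; rewrite subn0 divn_small.
Qed.

Lemma ancestor_child d (c : cell d) m :
  (m < lvl c)%N -> is_child (ancestor c m.+1) (ancestor c m).
Proof.
move=> hm; split => //= i.
rewrite -divnMA -expnSr; congr (_ %/ 2 ^ _)%N; lia.
Qed.

Lemma valid_child d (c p : cell d) : is_child c p -> valid_cell c <-> valid_cell p.
Proof.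
case=> hl hidx; rewrite /valid_cell hl; split=> hv i.
  by rewrite -hidx ltn_divLR // -expnSr.
by rewrite expnSr -ltn_divLR // hidx.
Qed.

Definition first_child d (c : cell d) : cell d :=
  @Cell d (lvl c).+1 (fun k => (idx c k * 2)%N).

Lemma first_childP d (c : cell d) : is_child (first_child c) c.
Proof. by split => //= i; rewrite mulnK. Qed.

Section Quadtree.
Variables (d : nat) (Q : set (cell d)).
Hypothesis hQ : quadtree Q.

Lemma quadtree_ancestor (c : cell d) m : Q c -> (m <= lvl c)%N -> Q (ancestor c m).
Proof.
case: hQ => _ _ _ hcl Qc.
suff H n m' : (m' + n = lvl c)%N -> Q (ancestor c m').
  by move=> hm; apply: (H (lvl c - m)%N); rewrite subnKC.
elim: n m' => [|n IH] m' hm'; first by rewrite addn0 in hm'; rewrite hm' ancestor_lvl.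
have hlt : (m' < lvl c)%N by rewrite -hm' addnS ltnS leq_addr.
have := IH m'.+1; rewrite addSnnS => /(_ hm').
by move=> /hcl /(_ (ancestor_child hlt)) [].
Qed.

(* Siblings enter a quadtree together, so one missing child suffices. *)
Lemma leaf_of_child_notin (c p : cell d) :
  Q p -> is_child c p -> ~ Q c -> leaf Q p.
Proof.
case: hQ => _ _ _ hcl Qp hcp nQc; split => // c' hc'p Qc'.
exact: nQc ((hcl c' p Qc' hc'p).2 c hcp).
Qed.

Lemma leaf_ancestor_notin (N : cell d) : valid_cell N -> ~ Q N ->
  exists2 k, (k < lvl N)%N & leaf Q (ancestor N k).
Proof.
move=> hvN nQN.
suff [k [hk Qk nQk]] : exists k, [/\ (k < lvl N)%N, Q (ancestor N k)
                                   & ~ Q (ancestor N k.+1)].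
  by exists k => //; apply: leaf_of_child_notin Qk (ancestor_child hk) nQk.
have : ~ Q (ancestor N (lvl N)) by rewrite ancestor_lvl.
elim: (lvl N) => [|n IH] nQn.
  by case: nQn; rewrite ancestor0 //; case: hQ.
have [Qn|/IH [k [hk Qk nQk]]] := pselect (Q (ancestor N n)); first by exists n.
by exists k; split=> //; apply: ltnW.
Qed.

End Quadtree.

Lemma finite_lvl_bounded d (U : set (cell d)) : finite_set U ->
  exists D, forall c, U c -> (lvl c <= D)%N.
Proof.
move=> /(finite_image (@lvl d)) /finite_seqP [ls hls].
exists (\big[maxn/0%N]_(l <- ls) l) => c Uc.
have : [set` ls] (lvl c) by rewrite -hls; exists c.
by move=> hin; apply: (leq_bigmax_seq (P := xpredT) (F := id) _ hin).
Qed.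

Definition full_tree d (D : nat) : set (cell d) :=
  [set c | valid_cell c /\ (lvl c <= D)%N].

Lemma quadtree_full_tree d D : quadtree (@full_tree d D).
Proof.
split.
- pose g (p : 'I_D.+1 * {ffun 'I_d -> 'I_(2 ^ D)}) :=
    @Cell d p.1 (fun k => val (p.2 k)).
  apply: (@sub_finite_set _ _ (g @` setT)); last exact/finite_image/finite_finset.
  case=> l f [hv hl]; have hl' : (l < D.+1)%N by [].
  have hk k : (f k < 2 ^ D)%N by apply: leq_trans (hv k) _; rewrite leq_exp2l.
  exists (Ordinal hl', [ffun k => Ordinal (hk k)]) => //.
  by rewrite /g /=; congr Cell; apply: funext => k; rewrite ffunE.
- by split => // i /=; rewrite expn0.
- by move=> c [].
- move=> c p [hv hl] hcp; have [hlc _] := hcp; split.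
    by split; [exact: (valid_child hcp).1 | rewrite hlc in hl; apply: ltnW].
  move=> c' hc'p; have [hlc' _] := hc'p.
  split; last by rewrite hlc' -hlc.
  exact/(valid_child hc'p).2/(valid_child hcp).1.
Qed.

Lemma leaf_full_tree_lvl d D (L : cell d) : leaf (full_tree D) L -> lvl L = D.
Proof.
move=> [[hvL hlL] hleaf]; apply/eqP; rewrite eqn_leq hlL leqNgt; apply/negP => hlt.
apply: (hleaf _ (first_childP L)); split => //.
exact/(valid_child (first_childP L)).2.
Qed.

Section Geometry.
Variables (R : realType) (d : nat) (a : 'I_d -> R) (s : R).
Hypothesis hs : 0 < s.

Lemma csize_gt0 (c : cell d) : 0 < csize s c.
Proof. by rewrite divr_gt0 // exprn_gt0. Qed.

Lemma ltr_csize (c c' : cell d) : (csize s c < csize s c') = (lvl c' < lvl c)%N.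
Proof.
rewrite /csize ltr_pM2l // ltf_pV2 ?posrE ?exprn_gt0 //.
by rewrite ltr_eXn2l // ltr1n.
Qed.

Lemma ler_csize (c c' : cell d) : (csize s c <= csize s c') = (lvl c' <= lvl c)%N.
Proof. by rewrite leNgt ltr_csize -leqNgt. Qed.

Lemma csize_le_expr (j : nat) (c : cell d) : csize s c <= 2 ^+ j * csize s c.
Proof. by rewrite ler_peMl ?(ltW (csize_gt0 c)) // exprn_ege1 // ler1n. Qed.

(* On the grid of mesh [s / 2^M], coordinates of coarser cells are naturals. *)
Lemma lo_refine (c : cell d) k M : (lvl c <= M)%N ->
  lo a s c k = a k + (s / 2 ^+ M) * ((idx c k * 2 ^ (M - lvl c))%N)%:R.
Proof.
move=> hM; rewrite /lo -(subnKC hM) exprD natrM natrX addKn; congr (_ + _).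
by field; rewrite !expf_neq0 // pnatr_eq0.
Qed.

Lemma csize_refine (c : cell d) M : (lvl c <= M)%N ->
  csize s c = (s / 2 ^+ M) * (2 ^ (M - lvl c))%N%:R.
Proof.
move=> hM; rewrite /csize -(subnKC hM) exprD natrX addKn.
by field; rewrite !expf_neq0 // pnatr_eq0.
Qed.

Lemma hi_refine (c : cell d) k M : (lvl c <= M)%N ->
  lo a s c k + csize s c =
  a k + (s / 2 ^+ M) * (((idx c k).+1 * 2 ^ (M - lvl c))%N)%:R.
Proof.
move=> hM; rewrite (lo_refine _ hM) (csize_refine hM).
by rewrite -addrA -mulrDr -natrD mulSn addnC.
Qed.

Lemma ler_grid (b t : R) (x y : nat) :
  0 < t -> (b + t * x%:R <= b + t * y%:R) = (x <= y)%N.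
Proof. by move=> ht; rewrite lerD2l ler_pM2l // ler_nat. Qed.

Lemma ltr_grid (b t : R) (x y : nat) :
  0 < t -> (b + t * x%:R < b + t * y%:R) = (x < y)%N.
Proof. by move=> ht; rewrite ltrD2l ltr_pM2l // ltr_nat. Qed.

Lemma ancestor_contains (N : cell d) m k : (m <= lvl N)%N ->
  lo a s (ancestor N m) k <= lo a s N k /\
  lo a s N k + csize s N <= lo a s (ancestor N m) k + csize s (ancestor N m).
Proof.
move=> hm; have hA : (lvl (ancestor N m) <= lvl N)%N by [].
have ht : 0 < s / 2 ^+ lvl N by rewrite divr_gt0 // exprn_gt0.
rewrite !(hi_refine _ hA) !(lo_refine _ hA).
rewrite (hi_refine _ (leqnn _)) (lo_refine _ (leqnn _)).
rewrite !ler_grid //= subnn !muln1; split; first exact: leq_divM.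
by apply: ltn_ceil; rewrite expn_gt0.
Qed.

Definition overlap (c c' : cell d) (k : 'I_d) : Prop :=
  lo a s c k < lo a s c' k + csize s c' /\ lo a s c' k < lo a s c k + csize s c.

Lemma overlap_ancestor (C L : cell d) : (lvl L <= lvl C)%N ->
  (forall k, overlap L C k) -> ancestor C (lvl L) = L.
Proof.
move=> hLC hov.
suff hidx k : (idx C k %/ 2 ^ (lvl C - lvl L))%N = idx L k.
  by case: L hLC hov hidx => l f /= *; congr Cell; apply: funext.
have [] := hov k; have ht : 0 < s / 2 ^+ lvl C by rewrite divr_gt0 // exprn_gt0.
rewrite (hi_refine _ hLC) (lo_refine _ hLC).
rewrite (hi_refine _ (leqnn _)) (lo_refine _ (leqnn _)).
rewrite !ltr_grid //= subnn !muln1 ltnS => hlo hhi.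
have hp : (0 < 2 ^ (lvl C - lvl L))%N by rewrite expn_gt0.
by apply/eqP; rewrite eqn_leq leq_divRL // hlo andbT -ltnS ltn_divLR.
Qed.

Lemma neighbor_coord (c c' : cell d) k :
  Num.max (lo a s c k) (lo a s c' k) <
    Num.min (lo a s c k + csize s c) (lo a s c' k + csize s c') <-> overlap c c' k.
Proof.
rewrite /overlap gt_max !lt_min !ltrDl !csize_gt0 /= andbT.
by split=> [/andP[]|[-> ->]].
Qed.

Lemma neighbor_of_sup (C N L : cell d) :
  (forall k, lo a s L k <= lo a s N k /\
             lo a s N k + csize s N <= lo a s L k + csize s L) ->
  neighbor a s C N -> (forall k, overlap L C k) \/ neighbor a s L C.
Proof.
move=> hsup [i [htouch hother]].
have hovL k : k != i -> overlap L C k.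
  move=> /hother /neighbor_coord[]; have [] := hsup k; rewrite /overlap; lra.
have [hovi|hovi] := pselect (overlap L C i).
  by left=> k; have [->|/hovL] := eqVneq k i.
right; exists i; split; last by move=> k /hovL /neighbor_coord.
have [hl hh] := hsup i; have := csize_gt0 N; have := csize_gt0 C.
case: htouch => htouch hC hN; [right | left].
- suff : lo a s C i + csize s C <= lo a s L i by lra.
  by rewrite leNgt; apply/negP => hlt; apply: hovi; split; lra.
- suff : lo a s L i + csize s L <= lo a s C i by lra.
  by rewrite leNgt; apply/negP => hlt; apply: hovi; split; lra.
Qed.

Lemma smooth_neighbor_mem (V : set (cell d)) j (C N : cell d) :
  quadtree V -> V C -> smooth a s V j C -> valid_cell N ->
  neighbor a s C N -> 2 ^+ j * csize s C <= csize s N -> V N.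
Proof.
move=> hV VC hsm hvN hnb hsz; apply: contrapT => nVN.
have [k hk hleaf] := leaf_ancestor_notin hV hvN nVN.
set L := ancestor N k in hleaf.
have hNL : csize s N < csize s L by rewrite ltr_csize.
have hLC : (lvl L < lvl C)%N.
  rewrite -ltr_csize; apply: le_lt_trans hNL.
  exact: le_trans (csize_le_expr j C) hsz.
have [hov|hnbLC] := neighbor_of_sup (fun k' => ancestor_contains k' (ltnW hk)) hnb.
  have hLanc : ancestor C (lvl L) = L by apply: overlap_ancestor (ltnW hLC) hov.
  apply: hleaf.2 (ancestor C (lvl L).+1) _ (quadtree_ancestor hV VC hLC).
  by rewrite -[X in is_child _ X]hLanc; apply: ancestor_child.
by have := hsm L hleaf hnbLC; lra.
Qed.

Lemma good_ext_full_tree (U B : set (cell d)) j D :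
  U `<=` full_tree D -> B `<=` U -> good_ext a s U B j (full_tree D).
Proof.
move=> hU hBU; split => [|//|c Bc L hL _]; first exact: quadtree_full_tree.
apply: le_trans (csize_le_expr j c).
by rewrite ler_csize (leaf_full_tree_lvl hL); case: (hU c (hBU c Bc)).
Qed.

Lemma good_ext_exists (U B : set (cell d)) j :
  quadtree U -> B `<=` U -> exists Q, good_ext a s U B j Q.
Proof.
case=> hfin _ hval _ hBU; have [D hD] := finite_lvl_bounded hfin.
by exists (full_tree D); apply: good_ext_full_tree => // c Uc; split; auto.
Qed.

Lemma sub_min_ext (U B : set (cell d)) j : U `<=` min_ext a s U B j.
Proof. by move=> c Uc Q [_ hUQ _]; apply: hUQ. Qed.

Lemma quadtree_min_ext (U B : set (cell d)) j :
  quadtree U -> B `<=` U -> quadtree (min_ext a s U B j).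
Proof.
move=> hU hBU; have [Q0 hQ0] := good_ext_exists j hU hBU.
have hsub : min_ext a s U B j `<=` Q0 by move=> c; apply.
have [[hfin0 _ hval0 _] _ _] := hQ0.
split.
- exact: sub_finite_set hsub hfin0.
- by apply: sub_min_ext; case: hU.
- by move=> c /hsub /hval0.
- move=> c p hc hcp; split=> [Q hQ | c' hc'p Q hQ]; have [[_ _ _ hcl] _ _] := hQ.
    exact: (hcl c p (hc Q hQ) hcp).1.
  exact: (hcl c p (hc Q hQ) hcp).2 c' hc'p.
Qed.

(* A leaf of the intersection is a leaf of some member Q of the family,
   where smoothness holds. *)
Lemma min_ext_smooth (U B : set (cell d)) j c :
  B c -> smooth a s (min_ext a s U B j) j c.
Proof.
move=> Bc L [ML hleaf] hnb.
have /existsNP[Q /not_implyP[hQ nQ]] := hleaf _ (first_childP L).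
have [hQq _ hsm] := hQ; apply: (hsm c Bc) => //.
exact: (leaf_of_child_notin hQq (ML Q hQ) (first_childP L) nQ).
Qed.

Variable T1 : set (cell d).
Hypothesis hT1 : quadtree T1.

Lemma ext_brand_sub n : (ext a s T1 n).2 `<=` (ext a s T1 n).1.
Proof. by case: n => [|n] // c []. Qed.

Lemma quadtree_ext n : quadtree (ext a s T1 n).1.
Proof. by elim: n => [|n IH] //=; apply: quadtree_min_ext IH (@ext_brand_sub n). Qed.

Lemma ext_brand n (N : cell d) : (ext a s T1 n).1 N ->
  exists2 i, (1 <= i <= n.+1)%N & brand_set a s T1 i N.
Proof.
elim: n => [|n IH] hN; first by exists 1%N.
have [/IH[i /andP[hi1 hi2] hb]|hn] := pselect ((ext a s T1 n).1 N).
  by exists i => //; rewrite hi1 (leq_trans hi2).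
by exists n.+2; rewrite ?leqnn //; split.
Qed.

End Geometry.

Theorem lemma16 (R : realType) (d : nat) (a : 'I_d -> R) (s : R) (hs : 0 < s)
  (T1 : set (cell d)) (hT1 : quadtree T1) (j : nat) (C N : cell d) :
  (1 <= j <= d.+1)%N ->
  brand_set a s T1 j C ->
  Tstar a s T1 N ->
  neighbor a s C N ->
  2 ^+ j * csize s C <= csize s N ->
  exists i : nat, [/\ (1 <= i <= j.+1)%N, (i <= d.+1)%N & brand_set a s T1 i N].
Proof.
case: j => [|n] // _ hC hN hnb hsz.
have hNmin : (ext a s T1 (minn n.+1 d)).1 N.
  have [hdn|hnd] := leqP d n; first by rewrite (minn_idPr (leqW hdn)).
  rewrite (minn_idPl hnd); have [_ _ hval _] := quadtree_ext a hs hT1 d.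
  have hCn : (ext a s T1 n.+1).1 C by apply: sub_min_ext; apply: ext_brand_sub.
  apply: (smooth_neighbor_mem hs (quadtree_ext a hs hT1 n.+1) hCn _ (hval N hN) hnb hsz).
  exact: min_ext_smooth.
have [i /andP[hi1 hi2] hb] := ext_brand hNmin.
by exists i; split; rewrite ?hi1 //; lia.
Qed.
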